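(* Let $n\ge3$, $a>0$, $0<b<a/n$, $X=\{x\in\mathbb R^n:\sum_{i=1}^nx_i=a,\ x_i\ge b,\ i=1,\dots,n\}$, $p=1+1/\ln n$, $\gamma=1/(e\ln n)$ and $\omega(x)=\frac1{p\gamma}\sum_{i=1}^n|x_i|^p$. With $\|\cdot\|=\|\cdot\|_1$: (i) $\omega$ is strongly convex on $X$ with modulus $\mu(\omega)=\frac{e}{n\,a^{2-p}}$, i.e. $(\omega'(x)-\omega'(y))^\top(x-y)\ge\frac{e}{na^{2-p}}\|x-y\|_1^2$ for all $x,y\in X$; (ii) $D_{\omega,X}:=\sqrt{2[\max_X\omega-\min_X\omega]}\le\sqrt{\frac{2a^p}{p\gamma}\big(1-n^{-1/\ln n}\big)}$; (iii) for all $x,y\in X$, $V_x(y)\le\frac12M(\omega)\|x-y\|_1^2$ with $M(\omega)=\frac{e}{b^{1-1/\ln n}}$, where $V_x(y)=\omega(y)-\omega(x)-(y-x)^\top\nabla\omega(x)$.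
   Context: $e=\exp(1)$; $\|x\|_1=\sum_i|x_i|$. *)

From Stdlib Require Import Reals Lra Lia.
Open Scope R_scope.

(* Vectors in R^n are functions nat -> R, only indices 0..n-1 matter. *)
Fixpoint rsum (n : nat) (f : nat -> R) : R :=
  match n with
  | O => 0
  | S k => rsum k f + f k
  end.

Definition InX (n : nat) (a b : R) (x : nat -> R) : Prop :=
  rsum n x = a /\ (forall i, (i < n)%nat -> b <= x i).

Definition norm1 (n : nat) (x : nat -> R) : R := rsum n (fun i => Rabs (x i)).

Definition pexp (n : nat) : R := 1 + 1 / ln (INR n).
Definition gam (n : nat) : R := 1 / (exp 1 * ln (INR n)).

Definition omega (n : nat) (x : nat -> R) : R :=
  1 / (pexp n * gam n) * rsum n (fun i => Rpower (Rabs (x i)) (pexp n)).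

Definition upd (x : nat -> R) (i : nat) (t : R) : nat -> R :=
  fun j => if Nat.eqb j i then t else x j.

Definition dotp (n : nat) (u v : nat -> R) : R := rsum n (fun i => u i * v i).

From Stdlib Require Import Reals Lra Lia.
Open Scope R_scope.

(* On X every coordinate lies in [b, a], and omega is a sum of the scalar
   functions t^p / (p gamma), whose second derivative t^(p-2) (p - 1) / gamma
   = e t^(p-2) is squeezed between e a^(p-2) and e b^(p-2) because p <= 2.
   The mean value theorem (for the gradient) and Taylor's formula with
   Lagrange remainder (for the Bregman divergence) turn these into the
   coordinatewise bounds of (i) and (iii), which pass to the l1 norm through
   |d|_2^2 <= |d|_1^2 <= n |d|_2^2.  For (ii), sum x_i^p is at most a^p
   (as x_i^(p-1) <= a^(p-1)) and, by Jensen, at least n (a/n)^p. *)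

Lemma rsum_ext n f g : (forall i, (i < n)%nat -> f i = g i) -> rsum n f = rsum n g.
Proof.
  induction n as [|n IH]; intros h; simpl; [reflexivity|].
  rewrite IH, h; auto; intros; apply h; lia.
Qed.

Lemma rsum_plus n f g : rsum n (fun i => f i + g i) = rsum n f + rsum n g.
Proof. induction n as [|n IH]; simpl; [ring|]. rewrite IH; ring. Qed.

Lemma rsum_minus n f g : rsum n (fun i => f i - g i) = rsum n f - rsum n g.
Proof. induction n as [|n IH]; simpl; [ring|]. rewrite IH; ring. Qed.

Lemma rsum_scal n c f : rsum n (fun i => c * f i) = c * rsum n f.
Proof. induction n as [|n IH]; simpl; [ring|]. rewrite IH; ring. Qed.

Lemma rsum_const n c : rsum n (fun _ => c) = INR n * c.
Proof. induction n as [|n IH]; simpl rsum; [simpl; ring|]. rewrite IH, S_INR; ring. Qed.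

Lemma rsum_le n f g : (forall i, (i < n)%nat -> f i <= g i) -> rsum n f <= rsum n g.
Proof.
  induction n as [|n IH]; intros h; simpl; [lra|].
  assert (f n <= g n) by (apply h; lia).
  assert (rsum n f <= rsum n g) by (apply IH; intros; apply h; lia).
  lra.
Qed.

Lemma rsum_nonneg n f : (forall i, (i < n)%nat -> 0 <= f i) -> 0 <= rsum n f.
Proof.
  intros h. rewrite <- (Rmult_0_r (INR n)), <- rsum_const. now apply rsum_le.
Qed.

Lemma rsum_ge_term n f i :
  (forall j, (j < n)%nat -> 0 <= f j) -> (i < n)%nat -> f i <= rsum n f.
Proof.
  induction n as [|n IH]; intros h hi; [lia|]. simpl.
  assert (0 <= rsum n f) by (apply rsum_nonneg; intros; apply h; lia).
  assert (0 <= f n) by (apply h; lia).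
  destruct (Nat.eq_dec i n) as [->|ne]; [lra|].
  assert (f i <= rsum n f) by (apply IH; [intros; apply h | ]; lia).
  lra.
Qed.

Lemma rsum_upd n f i u : (i < n)%nat ->
  rsum n (upd f i u) = rsum n f - f i + u.
Proof.
  unfold upd. induction n as [|n IH]; intros hi; [lia|]. simpl.
  destruct (Nat.eqb_spec n i) as [->|ne].
  - rewrite (rsum_ext i _ f); [ring|].
    intros j hj. destruct (Nat.eqb_spec j i); [lia|reflexivity].
  - rewrite IH by lia. ring.
Qed.

Lemma rsum_sq_le_sq_rsum n u :
  (forall i, (i < n)%nat -> 0 <= u i) -> rsum n (fun i => u i ^ 2) <= rsum n u ^ 2.
Proof.
  induction n as [|n IH]; intros h; cbn [rsum]; [lra|].
  assert (0 <= u n) by (apply h; lia).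
  assert (0 <= rsum n u) by (apply rsum_nonneg; intros; apply h; lia).
  assert (rsum n (fun i => u i ^ 2) <= rsum n u ^ 2) by (apply IH; intros; apply h; lia).
  nra.
Qed.

(* Cauchy-Schwarz against the constant vector: expand 0 <= sum (u_i - m)^2 at the mean m. *)
Lemma sq_rsum_le_card_rsum_sq n u : rsum n u ^ 2 <= INR n * rsum n (fun i => u i ^ 2).
Proof.
  destruct n as [|n]; [simpl; lra|].
  set (N := INR (S n)). assert (hN : 0 < N) by (apply lt_0_INR; lia).
  set (m := rsum (S n) u / N).
  assert (H : 0 <= rsum (S n) (fun i => (u i - m) ^ 2))
    by (apply rsum_nonneg; intros; apply pow2_ge_0).
  rewrite (rsum_ext _ _ (fun i => u i ^ 2 + (-2 * m) * u i + m ^ 2)) in H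
    by (intros; ring).
  rewrite !rsum_plus, rsum_scal, rsum_const in H.
  assert (Hm : rsum (S n) u = N * m) by (unfold m; field; lra).
  fold N in H. rewrite Hm in H |- *. nra.
Qed.

Lemma sq_norm1_le_card_rsum_sq n d :
  norm1 n d ^ 2 <= INR n * rsum n (fun i => d i ^ 2).
Proof.
  unfold norm1. rewrite (rsum_ext n (fun i => d i ^ 2) (fun i => Rabs (d i) ^ 2))
    by (intros; symmetry; apply pow2_abs).
  apply sq_rsum_le_card_rsum_sq.
Qed.

Lemma rsum_sq_le_sq_norm1 n d : rsum n (fun i => d i ^ 2) <= norm1 n d ^ 2.
Proof.
  unfold norm1. rewrite (rsum_ext n (fun i => d i ^ 2) (fun i => Rabs (d i) ^ 2))
    by (intros; symmetry; apply pow2_abs).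
  apply rsum_sq_le_sq_rsum. intros; apply Rabs_pos.
Qed.

Lemma MVT_strict f f' x y : x <> y ->
  (forall t, x <= t <= y \/ y <= t <= x -> derivable_pt_lim f t (f' t)) ->
  exists z, (x < z < y \/ y < z < x) /\ f y - f x = f' z * (y - x).
Proof.
  intros hxy hd. destruct (Rtotal_order x y) as [h|[h|h]]; [|contradiction|].
  - destruct (MVT_cor2 f f' x y h) as [z [E hz]]; [intros; apply hd; lra|].
    exists z; split; [lra|exact E].
  - destruct (MVT_cor2 f f' y x h) as [z [E hz]]; [intros; apply hd; lra|].
    exists z; split; [lra|]. replace (y - x) with (- (x - y)) by ring. lra.
Qed.

(* Cauchy's trick: the MVT applied to [phi], which vanishes at [x] and [y],
   produces a zero [c] of [phi'], and the MVT for [f'] between [x] and [c]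
   then isolates the remainder. *)
Lemma Taylor_Lagrange2 f f' f'' x y :
  (forall t, x <= t <= y \/ y <= t <= x -> derivable_pt_lim f t (f' t)) ->
  (forall t, x <= t <= y \/ y <= t <= x -> derivable_pt_lim f' t (f'' t)) ->
  exists z, (x <= z <= y \/ y <= z <= x) /\
    f y - f x - f' x * (y - x) = f'' z * (y - x) ^ 2 / 2.
Proof.
  intros hf hf'.
  destruct (Req_dec x y) as [<-|hxy]. { exists x; split; [left; lra | field]. }
  set (Rem := f y - f x - f' x * (y - x)).
  set (D := (y - x) * (y - x)).
  set (phi := fun t => (f t - f x - f' x * (t - x)) * D - Rem * ((t - x) * (t - x))).
  set (phi' := fun t => (f' t - f' x) * D - Rem * (2 * (t - x))).
  assert (hphi : forall t, x <= t <= y \/ y <= t <= x -> derivable_pt_lim phi t (phi' t)).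
  { intros t ht.
    assert (Hid := derivable_pt_lim_id t).
    assert (Hc := fun a => derivable_pt_lim_const a t).
    assert (H1 := derivable_pt_lim_minus _ _ _ _ _ Hid (Hc x)).
    assert (H2 := derivable_pt_lim_mult _ _ _ _ _ (Hc (f' x)) H1).
    assert (H3 := derivable_pt_lim_minus _ _ _ _ _ (hf t ht) (Hc (f x))).
    assert (H4 := derivable_pt_lim_minus _ _ _ _ _ H3 H2).
    assert (H5 := derivable_pt_lim_mult _ _ _ _ _ H4 (Hc D)).
    assert (H6 := derivable_pt_lim_mult _ _ _ _ _ H1 H1).
    assert (H7 := derivable_pt_lim_mult _ _ _ _ _ (Hc Rem) H6).
    assert (H8 := derivable_pt_lim_minus _ _ _ _ _ H5 H7).
    unfold mult_fct, minus_fct, id, fct_cte in H8.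
    unfold phi, phi'. match type of H8 with derivable_pt_lim _ _ ?l =>
      replace ((f' t - f' x) * D - Rem * (2 * (t - x))) with l by ring end.
    exact H8. }
  destruct (MVT_strict phi phi' x y hxy hphi) as [c [hc Ec]].
  assert (hphi'c : phi' c = 0).
  { unfold phi in Ec. unfold Rem, D in Ec.
    apply (Rmult_eq_reg_r (y - x)); [|lra]. rewrite <- Ec. ring. }
  assert (hcx : c <> x) by (destruct hc; lra).
  destruct (MVT_strict f' f'' x c (not_eq_sym hcx)) as [z [hz Ez]].
  { intros t ht. apply hf'. destruct hc, ht; lra. }
  exists z. split; [destruct hc, hz; lra|].
  unfold phi' in hphi'c. rewrite Ez in hphi'c. fold Rem. unfold D in hphi'c.
  assert (E : (c - x) * (f'' z * ((y - x) * (y - x)) - 2 * Rem) = 0)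
    by (rewrite <- hphi'c; ring).
  destruct (Rmult_integral _ _ E) as [E1|E1]; [lra|]. lra.
Qed.

Lemma Rle_Rpower_l_nonpos u v e : 0 < u -> u <= v -> e <= 0 -> Rpower v e <= Rpower u e.
Proof.
  intros hu huv he. replace e with (- - e) by ring.
  rewrite (Rpower_Ropp v (- e)), (Rpower_Ropp u (- e)).
  apply Rinv_le_contravar; [apply exp_pos|]. apply Rle_Rpower_l; lra.
Qed.

Lemma Rpower_eq_mul_pred y p : 0 < y -> Rpower y p = y * Rpower y (p - 1).
Proof.
  intros hy. replace p with (1 + (p - 1)) at 1 by ring.
  rewrite Rpower_plus, Rpower_1; auto.
Qed.

Lemma Rpower_MVT q x y : 0 < x -> 0 < y ->
  exists z, (x <= z <= y \/ y <= z <= x) /\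
    Rpower y q - Rpower x q = q * Rpower z (q - 1) * (y - x).
Proof.
  intros hx hy. destruct (Req_dec x y) as [<-|hxy]; [exists x; split; [lra|ring]|].
  destruct (MVT_strict (fun t => Rpower t q) (fun t => q * Rpower t (q - 1)) x y hxy)
    as [z [hz E]].
  - intros t ht. apply derivable_pt_lim_power. destruct ht; lra.
  - exists z. split; [destruct hz; lra|exact E].
Qed.

Lemma Rpower_Taylor2 p x y : 0 < x -> 0 < y ->
  exists z, (x <= z <= y \/ y <= z <= x) /\
    Rpower y p - Rpower x p - p * Rpower x (p - 1) * (y - x)
    = p * (p - 1) * Rpower z (p - 2) * (y - x) ^ 2 / 2.
Proof.
  intros hx hy.
  destruct (Taylor_Lagrange2 (fun t => Rpower t p) (fun t => p * Rpower t (p - 1))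
              (fun t => p * ((p - 1) * Rpower t (p - 2))) x y) as [z [hz E]].
  - intros t ht. apply derivable_pt_lim_power. destruct ht; lra.
  - intros t ht. apply derivable_pt_lim_scal with (f := fun t => Rpower t (p - 1)).
    replace (p - 2) with (p - 1 - 1) by ring.
    apply derivable_pt_lim_power. destruct ht; lra.
  - exists z. split; [exact hz|]. rewrite E. field.
Qed.

Lemma Rpower_tangent_le p x y : 1 <= p -> 0 < x -> 0 < y ->
  Rpower x p + p * Rpower x (p - 1) * (y - x) <= Rpower y p.
Proof.
  intros hp hx hy. destruct (Rpower_Taylor2 p x y hx hy) as [z [_ E]].
  assert (0 <= p * (p - 1) * Rpower z (p - 2) * (y - x) ^ 2 / 2).
  { assert (0 < Rpower z (p - 2)) by apply exp_pos.
    assert (0 <= p * (p - 1)) by nra.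
    assert (0 <= (y - x) ^ 2) by apply pow2_ge_0.
    assert (0 <= p * (p - 1) * Rpower z (p - 2)) by nra. nra. }
  lra.
Qed.

Lemma Rpower_bregman_le p B x y : 1 <= p <= 2 -> 0 < B <= x -> B <= y ->
  Rpower y p - Rpower x p - p * Rpower x (p - 1) * (y - x)
  <= p * (p - 1) / 2 * Rpower B (p - 2) * (y - x) ^ 2.
Proof.
  intros hp hx hy. destruct (Rpower_Taylor2 p x y) as [z [hz E]]; [lra|lra|].
  rewrite E.
  assert (Rpower z (p - 2) <= Rpower B (p - 2))
    by (apply Rle_Rpower_l_nonpos; [|destruct hz|]; lra).
  assert (0 <= p * (p - 1) / 2) by nra.
  assert (0 <= (y - x) ^ 2) by apply pow2_ge_0.
  replace (p * (p - 1) * Rpower z (p - 2) * (y - x) ^ 2 / 2)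
    with (p * (p - 1) / 2 * Rpower z (p - 2) * (y - x) ^ 2) by field.
  apply Rmult_le_compat_r; [lra|]. apply Rmult_le_compat_l; lra.
Qed.

Lemma Rpower_incr_gap q A x y : 0 <= q <= 1 -> 0 < x <= A -> 0 < y <= A ->
  q * Rpower A (q - 1) * (x - y) ^ 2 <= (Rpower x q - Rpower y q) * (x - y).
Proof.
  intros hq hx hy. destruct (Rpower_MVT q y x) as [z [hz E]]; [lra|lra|].
  rewrite E.
  assert (Rpower A (q - 1) <= Rpower z (q - 1))
    by (apply Rle_Rpower_l_nonpos; [destruct hz| |]; lra).
  assert (0 <= (x - y) ^ 2) by apply pow2_ge_0.
  replace (q * Rpower z (q - 1) * (x - y) * (x - y))
    with (q * Rpower z (q - 1) * (x - y) ^ 2) by ring.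
  apply Rmult_le_compat_r; [lra|]. apply Rmult_le_compat_l; lra.
Qed.

Lemma rsum_Rpower_le_Rpower_rsum n p y : (0 < n)%nat -> 1 <= p ->
  (forall i, (i < n)%nat -> 0 < y i) ->
  rsum n (fun i => Rpower (y i) p) <= Rpower (rsum n y) p.
Proof.
  intros hn hp hy.
  assert (hle : forall i, (i < n)%nat -> y i <= rsum n y)
    by (intros i hi; apply rsum_ge_term; [intros; apply Rlt_le, hy|]; auto).
  assert (ha : 0 < rsum n y) by (specialize (hy 0%nat hn); specialize (hle 0%nat hn); lra).
  rewrite (Rpower_eq_mul_pred (rsum n y)), Rmult_comm, <- rsum_scal by exact ha.
  apply rsum_le. intros i hi. specialize (hy i hi). rewrite Rpower_eq_mul_pred by exact hy.
  rewrite Rmult_comm. apply Rmult_le_compat_r; [lra|].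
  apply Rle_Rpower_l; [lra|]. split; [lra|]. apply hle, hi.
Qed.

(* Jensen's inequality for [t^p]: sum the tangent-line bounds at the mean. *)
Lemma card_Rpower_mean_le_rsum n p x : (0 < n)%nat -> 1 <= p ->
  (forall i, (i < n)%nat -> 0 < x i) ->
  INR n * Rpower (rsum n x / INR n) p <= rsum n (fun i => Rpower (x i) p).
Proof.
  intros hn hp hx.
  assert (hN : 0 < INR n) by (apply lt_0_INR; lia).
  set (c := rsum n x / INR n).
  assert (hc : 0 < c).
  { apply Rdiv_lt_0_compat; [|exact hN].
    apply Rlt_le_trans with (x 0%nat); [apply hx, hn|].
    apply rsum_ge_term; [intros; apply Rlt_le, hx|]; auto. }
  set (k := p * Rpower c (p - 1)).
  apply Rle_trans with (rsum n (fun i => Rpower c p + k * (x i - c))).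
  - rewrite rsum_plus, rsum_const, rsum_scal, rsum_minus, rsum_const.
    replace (rsum n x) with (INR n * c) by (unfold c; field; lra). lra.
  - apply rsum_le. intros i hi. apply Rpower_tangent_le; auto.
Qed.

Lemma ln_ge_1 n : (3 <= n)%nat -> 1 <= ln (INR n).
Proof.
  intros hn. assert (H3 : 3 <= INR n) by (apply le_INR in hn; simpl in hn; lra).
  destruct (Rle_or_lt 1 (ln (INR n))) as [h|h]; [exact h|].
  apply exp_increasing in h. rewrite exp_ln in h by lra. pose proof exp_le_3. lra.
Qed.

Lemma pexp_gt_1 n : 0 < ln (INR n) -> 1 < pexp n.
Proof.
  intros h. unfold pexp. assert (0 < 1 / ln (INR n)) by (apply Rdiv_lt_0_compat; lra). lra.
Qed.

Lemma pexp_le_2 n : 1 <= ln (INR n) -> pexp n <= 2.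
Proof.
  intros h. unfold pexp.
  assert (1 / ln (INR n) <= 1).
  { unfold Rdiv. rewrite Rmult_1_l, <- Rinv_1 at 1. apply Rinv_le_contravar; lra. }
  lra.
Qed.

Lemma gam_pos n : 0 < ln (INR n) -> 0 < gam n.
Proof.
  intros h. unfold gam. apply Rdiv_lt_0_compat; [lra|]. apply Rmult_lt_0_compat; auto.
  apply exp_pos.
Qed.

(* The choice of [gam] makes the curvature constant [(p - 1) / gam] of [omega]
   equal to [e], whatever [n]. *)
Lemma pexp_pred_div_gam n : 0 < ln (INR n) -> (pexp n - 1) / gam n = exp 1.
Proof. intros h. unfold pexp, gam. pose proof (exp_pos 1). field. lra. Qed.

Lemma omega_nonneg n x : (forall i, (i < n)%nat -> 0 <= x i) ->
  omega n x = 1 / (pexp n * gam n) * rsum n (fun i => Rpower (x i) (pexp n)).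
Proof.
  intros h. unfold omega. f_equal. apply rsum_ext. intros i hi.
  rewrite Rabs_pos_eq; auto.
Qed.

Lemma omega_partial_derivative n x i : 0 < ln (INR n) -> (i < n)%nat -> 0 < x i ->
  derivable_pt_lim (fun t => omega n (upd x i t)) (x i) (Rpower (x i) (pexp n - 1) / gam n).
Proof.
  intros hL hi hx. pose proof (pexp_gt_1 n hL) as hp. pose proof (gam_pos n hL) as hgam.
  set (p := pexp n) in *. set (C := 1 / (p * gam n)).
  set (K := rsum n (fun j => Rpower (Rabs (x j)) p) - Rpower (Rabs (x i)) p).
  apply derivable_pt_lim_ext with (f := fun t => C * (Rpower (Rabs t) p + K)).
  { intros t. unfold omega, K. fold p C. f_equal. symmetry.
    transitivity (rsum n (upd (fun j => Rpower (Rabs (x j)) p) i (Rpower (Rabs t) p))).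
    - apply rsum_ext. intros j _. unfold upd. destruct (Nat.eqb j i); reflexivity.
    - rewrite rsum_upd by exact hi. ring. }
  assert (Hpow : derivable_pt_lim (fun u => Rpower u p) (Rabs (x i)) (p * Rpower (x i) (p - 1))).
  { rewrite Rabs_pos_eq by lra. apply derivable_pt_lim_power. lra. }
  pose proof (derivable_pt_lim_scal _ C _ _ (derivable_pt_lim_plus _ _ _ _ _
    (derivable_pt_lim_comp _ _ _ _ _ (Rabs_derive_1 _ hx) Hpow)
    (derivable_pt_lim_const K (x i)))) as H.
  unfold comp, plus_fct, mult_real_fct, fct_cte in H.
  replace (Rpower (x i) (p - 1) / gam n) with (C * (p * Rpower (x i) (p - 1) * 1 + 0)).
  - exact H.
  - unfold C. field. split; lra.
Qed.

Section OmegaOnX.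

Variables (n : nat) (a b : R).
Hypotheses (hn : (3 <= n)%nat) (ha : 0 < a) (hb : 0 < b).

Lemma InX_pos x i : InX n a b x -> (i < n)%nat -> 0 < x i.
Proof. intros [_ hx] hi. specialize (hx i hi). lra. Qed.

Lemma InX_le x i : InX n a b x -> (i < n)%nat -> x i <= a.
Proof.
  intros hX hi. rewrite <- (proj1 hX).
  apply rsum_ge_term; [intros j hj; apply Rlt_le, (InX_pos x j hX hj)|exact hi].
Qed.

Lemma omega_range_bound x y : InX n a b x -> InX n a b y ->
  omega n y - omega n x
  <= Rpower a (pexp n) / (pexp n * gam n) * (1 - Rpower (INR n) (1 - pexp n)).
Proof.
  intros hx hy.
  pose proof (ln_ge_1 n hn) as hL. pose proof (pexp_gt_1 n ltac:(lra)) as hp.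
  pose proof (gam_pos n ltac:(lra)) as hgam.
  assert (hN : 0 < INR n) by (apply lt_0_INR; lia).
  rewrite !omega_nonneg by (intros; apply Rlt_le; eauto using InX_pos).
  assert (Hy := rsum_Rpower_le_Rpower_rsum n (pexp n) y ltac:(lia) ltac:(lra)
                  (fun i hi => InX_pos y i hy hi)).
  assert (Hx := card_Rpower_mean_le_rsum n (pexp n) x ltac:(lia) ltac:(lra)
                  (fun i hi => InX_pos x i hx hi)).
  rewrite (proj1 hx) in Hx. rewrite (proj1 hy) in Hy.
  assert (E : INR n * Rpower (a / INR n) (pexp n) = Rpower a (pexp n) * Rpower (INR n) (1 - pexp n)).
  { unfold Rpower. rewrite <- (exp_ln (INR n)) at 1 by lra. rewrite <- !exp_plus.
    f_equal. unfold Rdiv. rewrite ln_mult, ln_Rinv by auto using Rinv_0_lt_compat. ring. }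
  rewrite E in Hx.
  set (C := 1 / (pexp n * gam n)).
  assert (hC : 0 < C) by (apply Rdiv_lt_0_compat; nra).
  replace (Rpower a (pexp n) / (pexp n * gam n) * (1 - Rpower (INR n) (1 - pexp n)))
    with (C * Rpower a (pexp n) - C * (Rpower a (pexp n) * Rpower (INR n) (1 - pexp n)))
    by (unfold C; field; nra).
  nra.
Qed.

Variable g : (nat -> R) -> nat -> R.
Hypothesis hg : forall x, InX n a b x -> forall i, (i < n)%nat ->
  derivable_pt_lim (fun t => omega n (upd x i t)) (x i) (g x i).

Lemma g_eq_grad_omega x i : InX n a b x -> (i < n)%nat -> g x i = Rpower (x i) (pexp n - 1) / gam n.
Proof.
  intros hx hi. apply (uniqueness_limite _ _ _ _ (hg x hx i hi)).
  apply omega_partial_derivative; [pose proof (ln_ge_1 n hn); lra|exact hi|].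
  exact (InX_pos x i hx hi).
Qed.

Lemma omega_strongly_convex x y : InX n a b x -> InX n a b y ->
  exp 1 * Rpower a (pexp n - 2) * rsum n (fun i => (x i - y i) ^ 2)
  <= dotp n (fun i => g x i - g y i) (fun i => x i - y i).
Proof.
  intros hx hy.
  pose proof (ln_ge_1 n hn) as hL. pose proof (pexp_gt_1 n ltac:(lra)) as hp.
  pose proof (pexp_le_2 n hL) as hp2. pose proof (gam_pos n ltac:(lra)) as hgam.
  unfold dotp. rewrite <- rsum_scal. apply rsum_le. intros i hi.
  rewrite !g_eq_grad_omega by auto.
  rewrite <- (pexp_pred_div_gam n) by lra.
  assert (H := Rpower_incr_gap (pexp n - 1) a (x i) (y i) ltac:(lra)
                 (conj (InX_pos x i hx hi) (InX_le x i hx hi))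
                 (conj (InX_pos y i hy hi) (InX_le y i hy hi))).
  replace (pexp n - 1 - 1) with (pexp n - 2) in H by ring.
  apply Rmult_le_compat_l with (r := / gam n) in H; [|apply Rlt_le, Rinv_0_lt_compat; lra].
  unfold Rdiv. lra.
Qed.

Lemma omega_bregman_le x y : InX n a b x -> InX n a b y ->
  omega n y - omega n x - dotp n (fun i => y i - x i) (g x)
  <= exp 1 / 2 * Rpower b (pexp n - 2) * rsum n (fun i => (x i - y i) ^ 2).
Proof.
  intros hx hy.
  pose proof (ln_ge_1 n hn) as hL. pose proof (pexp_gt_1 n ltac:(lra)) as hp.
  pose proof (pexp_le_2 n hL) as hp2. pose proof (gam_pos n ltac:(lra)) as hgam.
  rewrite !omega_nonneg by (intros; apply Rlt_le; eauto using InX_pos).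
  unfold dotp. rewrite <- !rsum_scal, <- !rsum_minus. apply rsum_le. intros i hi.
  rewrite g_eq_grad_omega by auto.
  rewrite <- (pexp_pred_div_gam n) by lra.
  assert (H := Rpower_bregman_le (pexp n) b (x i) (y i) ltac:(lra)
                 (conj hb (proj2 hx i hi)) (proj2 hy i hi)).
  apply Rmult_le_compat_l with (r := 1 / (pexp n * gam n)) in H;
    [|apply Rlt_le, Rdiv_lt_0_compat; nra].
  replace ((y i - x i) ^ 2) with ((x i - y i) ^ 2) in H by ring.
  match type of H with _ <= ?r => replace r with
    ((pexp n - 1) / gam n / 2 * Rpower b (pexp n - 2) * (x i - y i) ^ 2) in H
    by (field; lra) end.
  match type of H with ?l <= _ => replace l with
    (1 / (pexp n * gam n) * Rpower (y i) (pexp n) - 1 / (pexp n * gam n) * Rpower (x i) (pexp n)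
     - (y i - x i) * (Rpower (x i) (pexp n - 1) / gam n)) in H
    by (field; lra) end.
  exact H.
Qed.

End OmegaOnX.

Theorem mainTheorem15 (n : nat) (a b : R) (g : (nat -> R) -> nat -> R)
  (hn : (3 <= n)%nat) (ha : 0 < a) (hb0 : 0 < b) (hba : b < a / INR n)
  (hg : forall x, InX n a b x -> forall i, (i < n)%nat ->
          derivable_pt_lim (fun t => omega n (upd x i t)) (x i) (g x i)) :
  (forall x y, InX n a b x -> InX n a b y ->
     dotp n (fun i => g x i - g y i) (fun i => x i - y i)
     >= exp 1 / (INR n * Rpower a (2 - pexp n))
        * (norm1 n (fun i => x i - y i)) ^ 2)
  /\
  (forall x y, InX n a b x -> InX n a b y ->
     sqrt (2 * (omega n y - omega n x))
     <= sqrt (2 * Rpower a (pexp n) / (pexp n * gam n)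
              * (1 - Rpower (INR n) (- (1 / ln (INR n))))))
  /\
  (forall x y, InX n a b x -> InX n a b y ->
     omega n y - omega n x - dotp n (fun i => y i - x i) (g x)
     <= 1 / 2 * (exp 1 / Rpower b (1 - 1 / ln (INR n)))
        * (norm1 n (fun i => x i - y i)) ^ 2).
Proof.
  (* [hba] only makes X nonempty; the bounds hold vacuously otherwise. *)
  assert (hN : 0 < INR n) by (apply lt_0_INR; lia).
  assert (hpa : 0 < Rpower a (pexp n - 2)) by apply exp_pos.
  assert (hpb : 0 < Rpower b (pexp n - 2)) by apply exp_pos.
  pose proof (exp_pos 1) as he.
  split; [|split]; intros x y hx hy.
  - replace (2 - pexp n) with (- (pexp n - 2)) by ring. rewrite Rpower_Ropp.
    apply Rle_ge. eapply Rle_trans; [|apply (omega_strongly_convex n a b hn hb0 g hg); auto].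
    pose proof (sq_norm1_le_card_rsum_sq n (fun i => x i - y i)) as H.
    set (A := exp 1 * Rpower a (pexp n - 2)).
    replace (exp 1 / (INR n * / Rpower a (pexp n - 2))) with (A / INR n)
      by (unfold A; field; split; lra).
    apply Rle_trans with (A / INR n * (INR n * rsum n (fun i => (x i - y i) ^ 2))).
    + apply Rmult_le_compat_l; [apply Rlt_le, Rdiv_lt_0_compat; unfold A; nra | exact H].
    + right. field. lra.
  - apply sqrt_le_1_alt.
    replace (- (1 / ln (INR n))) with (1 - pexp n) by (unfold pexp; ring).
    pose proof (omega_range_bound n a b hn ha hb0 x y hx hy). unfold Rdiv in *. lra.
  - replace (1 - 1 / ln (INR n)) with (- (pexp n - 2)) by (unfold pexp; ring).
    rewrite Rpower_Ropp.
    eapply Rle_trans; [apply (omega_bregman_le n a b hn hb0 g hg); auto|].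
    replace (1 / 2 * (exp 1 / / Rpower b (pexp n - 2)))
      with (exp 1 / 2 * Rpower b (pexp n - 2)) by (field; lra).
    apply Rmult_le_compat_l; [nra|]. apply rsum_sq_le_sq_norm1.
Qed.
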